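(* Let $n\geq 4$ and let $Q$ be any convex $n$-gon. Then there exist vectors $x_d\in X_Q$, one for each $d\in\mathrm{Diag}_n$, such that $\langle [\psi_{d'}], x_d\rangle>0$ for all $d,d'\in\mathrm{Diag}_n$ that do not cross (including $d=d'$). Equivalently, the secondary polytope $\Sigma_Q$ satisfies: there is an assignment $f\mapsto x_f\in X_Q$ on facets with $\langle f_1^\perp,x_{f_2}\rangle>0$ whenever facets $f_1,f_2$ share a vertex.
   Context: Let $Q$ be a convex $n$-gon in $\mathbb{R}^2$ with vertices $p_1,\dots,p_n$ in cyclic order; identify $p_i$ with label $i$, so triangulations of $Q$ (using only vertices of $Q$) are identified with elements of $\mathcal{T}_n$ (each triangulation identified with its set of diagonals) and diagonals with elements of $\mathrm{Diag}_n=\{\{i,j\}\subseteq[n]: i-j\not\equiv\pm1 \pmod n\}$. Two diagonals cross if they meet in the interior of $Q$. Let $X_Q$ be the space of formal combinations $\sum_{p\in V(Q)} c_p\cdot p$ with $\sum_p c_p=0$ and $\sum_p c_p p=0$ in $\mathbb{R}^2$; let $X_Q^*$ be the space of functions $V(Q)\to\mathbb{R}$ modulo restrictions of affine functions $\mathbb{R}^2\to\mathbb{R}$, with pairing $\langle[\psi],\sum_p c_p\cdot p\rangle=\sum_p c_p\psi(p)$. For a triangulation $T$ let $v_T=(\operatorname{area}(Q_{T,p}))_{p\in V(Q)}$ where $Q_{T,p}$ is the union of the triangles of $T$ having $p$ as a vertex. The secondary polytope $\Sigma_Q$ is the convex hull of the $v_T$, translated to lie in $X_Q$. It is known (Gelfand–Kapranov–Zelevinsky)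 that $\Sigma_Q$ is a full-dimensional polytope in the $(n-3)$-dimensional space $X_Q$ realizing the associahedron: its vertices are exactly the points $v_T$, $T\in\mathcal{T}_n$; its facets are $f_d$, $d\in\mathrm{Diag}_n$, where $f_d$ contains $v_T$ iff $d\in T$; and an outward normal of $f_d$ is $f_d^\perp=[\psi_d]$, where $\psi_d=\min(\ell_d,0)$ restricted to $V(Q)$ and $\ell_d$ is any nonzero affine function vanishing at both endpoints of $d$. Two facets $f_d,f_{d'}$ share a vertex iff $d,d'$ do not cross. *)

From HB Require Import structures.
From mathcomp Require Import all_boot all_order all_algebra.
Set Implicit Arguments. Unset Strict Implicit. Unset Printing Implicit Defensive.
Import Order.TTheory GRing.Theory Num.Theory.
Local Open Scope ring_scope.

Section Polygon.
Variable R : realFieldType.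
Variable n : nat.

Definition orient (a b c : R * R) : R :=
  (b.1 - a.1) * (c.2 - a.2) - (b.2 - a.2) * (c.1 - a.1).

(* p_0, ..., p_{n-1} (label i+1 in the paper) are the vertices of a convex
   n-gon in cyclic order (counterclockwise or clockwise): every triple of
   vertices taken in cyclic order has the same strict orientation. *)
Definition convex_polygon (p : 'I_n -> R * R) : Prop :=
  (forall i j k : 'I_n, (i < j)%N -> (j < k)%N -> 0 < orient (p i) (p j) (p k)) \/
  (forall i j k : 'I_n, (i < j)%N -> (j < k)%N -> orient (p i) (p j) (p k) < 0).

(* diagonals {i, j}, written with i < j: i - j not congruent to 0, 1, -1 mod n *)
Definition is_diag (i j : 'I_n) : bool :=
  [&& (i < j)%N, (i.+1 < j)%N & ~~ ((i == 0%N :> nat) && (j == n.-1 :> nat))].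

(* two diagonals {i,j}, {k,l} (i<j, k<l) of a convex polygon cross (meet in
   the interior of Q) iff their endpoints strictly interleave *)
Definition cross (i j k l : 'I_n) : bool :=
  ((i < k)%N && (k < j)%N && (j < l)%N) || ((k < i)%N && (i < l)%N && (l < j)%N).

(* X_Q: formal combinations sum_p c_p p with sum c_p = 0 and sum c_p p = 0 *)
Definition in_XQ (p : 'I_n -> R * R) (c : 'I_n -> R) : Prop :=
  [/\ \sum_(k < n) c k = 0,
      \sum_(k < n) c k * (p k).1 = 0 &
      \sum_(k < n) c k * (p k).2 = 0].

(* an affine function R^2 -> R, (x,y) |-> a x + b y + e, coded by (a, b, e) *)
Definition affine_eval (f : R * R * R) (q : R * R) : R :=
  f.1.1 * q.1 + f.1.2 * q.2 + f.2.

Definition nonzero_affine (f : R * R * R) : Prop := f != (0, 0, 0).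

Definition psi_of (p : 'I_n -> R * R) (f : R * R * R) (k : 'I_n) : R :=
  Num.min (affine_eval f (p k)) 0.

Definition pairing (psi c : 'I_n -> R) : R := \sum_(k < n) c k * psi k.

End Polygon.

From HB Require Import structures.
From mathcomp Require Import all_boot all_order all_algebra.
From mathcomp Require Import ring zify.
Set Implicit Arguments. Unset Strict Implicit. Unset Printing Implicit Defensive.
Import Order.TTheory GRing.Theory Num.Theory.
Local Open Scope ring_scope.

(* For a diagonal {i, j}, the function w |-> orient p_i p_j p_w is affine in p_w,
   vanishes at i and j and, by convexity, takes both signs.  Weighting the
   vertices where it is positive by -N and the others by -P, with N and P the
   masses of its positive and negative parts, gives negative weights that
   annihilate it.  Hence their moment about p_i is parallel to p_j - p_i, and
   changing the weights at i and j alone puts them in X_Q: this is x_ij, which is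
   negative off {i, j}.
   An affine h vanishing at the ends of a diagonal {k, l} is a nonzero multiple of
   orient p_k p_l, so when {k, l} does not cross {i, j}, h has one weak sign at
   p_i and p_j and the opposite strict sign at some vertex.  As x_ij kills affine
   functions, pairing it with min(h, 0) or with min(-h, 0) gives the same value;
   choosing h < 0 at that vertex, only vertices of negative weight contribute, each
   positively. *)

Section PlaneGeometry.
Variable R : realFieldType.
Implicit Types (a b c d m q : R * R) (f : R * R * R).

Definition dot (u v : R * R) : R := u.1 * v.1 + u.2 * v.2.
Definition det2 (u v : R * R) : R := u.1 * v.2 - u.2 * v.1.
Definition proj_coef d m : R := dot d m / dot d d.

Lemma orient_swap23 a b c : orient a c b = - orient a b c.
Proof. rewrite /orient; ring. Qed.

Lemma orient_rot a b c : orient b c a = orient a b c.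
Proof. rewrite /orient; ring. Qed.

Lemma orient_same12 a c : orient a a c = 0.
Proof. rewrite /orient; ring. Qed.

Lemma orient_same13 a b : orient a b a = 0.
Proof. rewrite /orient; ring. Qed.

Lemma orient_same23 a b : orient a b b = 0.
Proof. rewrite /orient; ring. Qed.

Lemma dot_self_eq0 d : (dot d d == 0) = (d == 0).
Proof.
rewrite /dot -!expr2 paddr_eq0 ?sqr_ge0 // !sqrf_eq0.
by case: d => x y; rewrite xpair_eqE.
Qed.

Lemma det2_eq0_proj d m : d != 0 -> det2 d m = 0 ->
  m.1 = proj_coef d m * d.1 /\ m.2 = proj_coef d m * d.2.
Proof.
rewrite -dot_self_eq0 => dd0 dm0.
have e1 : m.1 * dot d d = dot d m * d.1 - d.2 * det2 d m.
  by rewrite /dot /det2; ring.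
have e2 : m.2 * dot d d = dot d m * d.2 + d.1 * det2 d m.
  by rewrite /dot /det2; ring.
rewrite dm0 mulr0 subr0 in e1; rewrite dm0 mulr0 addr0 in e2.
by rewrite /proj_coef mulrAC -e1 mulfK // mulrAC -e2 mulfK.
Qed.

Lemma affine_evalN f q : affine_eval (- f) q = - affine_eval f q.
Proof. rewrite /affine_eval /=; ring. Qed.

Lemma affine_eval_eq0 f : (forall q, affine_eval f q = 0) -> f = (0, 0, 0).
Proof.
case: f => [[u v] e] f0; move: (f0 (0, 0)) (f0 (1, 0)) (f0 (0, 1)).
rewrite /affine_eval /= !mulr0 !mulr1 !addr0 !add0r => ->.
by rewrite !addr0 => -> ->.
Qed.

Lemma affine_eval_orient f a b : a != b ->
  affine_eval f a = 0 -> affine_eval f b = 0 ->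
  forall q, affine_eval f q = det2 (b - a) f.1 / dot (b - a) (b - a) * orient a b q.
Proof.
move=> ab fa fb q; set d := b - a.
have dd0 : dot d d != 0 by rewrite dot_self_eq0 subr_eq0 eq_sym.
have grad : dot f.1 d = affine_eval f b - affine_eval f a.
  by rewrite /dot /affine_eval /d /=; ring.
have lagrange : dot d d * affine_eval f q =
    det2 d f.1 * orient a b q + dot f.1 d * dot d (q - a) + dot d d * affine_eval f a.
  by rewrite /dot /det2 /orient /affine_eval /d /=; ring.
rewrite grad fa fb subrr mul0r mulr0 !addr0 in lagrange.
by rewrite mulrAC -lagrange mulrC mulKf.
Qed.

Lemma nonzero_affine_orient f a b : nonzero_affine f -> a != b ->
    affine_eval f a = 0 -> affine_eval f b = 0 ->
  exists2 lam, lam != 0 & forall q, affine_eval f q = lam * orient a b q.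
Proof.
move=> f0 ab fa fb; have fq := affine_eval_orient ab fa fb.
exists (det2 (b - a) f.1 / dot (b - a) (b - a)) => //.
apply: contra f0 => /eqP lam0; apply/eqP/affine_eval_eq0 => q.
by rewrite fq lam0 mul0r.
Qed.

Lemma min0N (y : R) : Num.min (- y) 0 = Num.min y 0 - y.
Proof.
case: (leP 0 y) => hy.
  by rewrite min_l ?oppr_le0 // sub0r.
by rewrite min_r ?oppr_ge0 ?(ltW hy) // subrr.
Qed.

End PlaneGeometry.

Section SignedSums.
Variables (R : realFieldType) (I : finType).
Implicit Types (c g : I -> R).

Lemma sum_max0_gt0 g v : 0 < g v -> 0 < \sum_w Num.max (g w) 0.
Proof.
move=> gv; rewrite (bigD1 v) //= (max_l (ltW gv)) ltr_wpDr //.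
by apply: sumr_ge0 => w _; rewrite le_max lexx orbT.
Qed.

Lemma sum_mul_min0_gt0 c g w0 : (forall w, g w < 0 -> c w < 0) -> g w0 < 0 ->
  0 < \sum_w c w * Num.min (g w) 0.
Proof.
move=> cg gw0.
have term_gt0 w : g w < 0 -> 0 < c w * Num.min (g w) 0.
  by move=> gw; rewrite (min_l (ltW gw)) nmulr_rgt0 ?cg.
rewrite (bigD1 w0) //= ltr_wpDr ?term_gt0 //.
apply: sumr_ge0 => w _; have [/term_gt0/ltW // | gw] := boolP (g w < 0).
by rewrite min_r ?mulr0 // leNgt.
Qed.

(* The pairing with [g] is [-P N + N P = 0], with [N], [P] the masses of the
   positive and negative parts of [g]; zeros of [g] get weight [-N] too, so that
   all weights are negative. *)
Definition balance g (w : I) : R :=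
  - (if 0 < g w then \sum_v Num.max (- g v) 0 else \sum_v Num.max (g v) 0).

Lemma balance_orth g : \sum_w balance g w * g w = 0.
Proof.
set P := \sum_v Num.max (- g v) 0; set N := \sum_v Num.max (g v) 0.
have term w : balance g w * g w = N * Num.max (- g w) 0 - P * Num.max (g w) 0.
  rewrite /balance -/P -/N; case: ifPn => [gw | /negbTE gw].
    rewrite (max_l (ltW gw)) (@max_r _ _ (- g w)) ?oppr_le0 ?(ltW gw) //; ring.
  rewrite (@max_r _ _ (g w)) ?(@max_l _ _ (- g w)) ?oppr_ge0 ?leNgt ?gw //; ring.
by rewrite (eq_bigr _ (fun w _ => term w)) sumrB -!mulr_sumr -/P -/N mulrC subrr.
Qed.

Lemma balance_lt0 g u v w : g u * g v < 0 -> balance g w < 0.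
Proof.
wlog gu : u v / 0 < g u.
  move=> hwlog uv; case: (ltgtP (g u) 0) => gu; last by rewrite gu mul0r ltxx in uv.
    by apply: (hwlog v u); rewrite 1?mulrC // -(nmulr_rlt0 _ gu).
  exact: hwlog gu uv.
rewrite pmulr_rlt0 // => gv.
rewrite /balance oppr_lt0; case: ifP => _.
  by apply: (sum_max0_gt0 (g := fun w => - g w)) (v) _; rewrite oppr_gt0.
exact: sum_max0_gt0 gu.
Qed.

End SignedSums.

Section DualPairing.
Variables (R : realFieldType) (n : nat) (p : 'I_n -> R * R).
Implicit Types (c x : 'I_n -> R) (f : R * R * R).

Lemma pairing_affine_eq0 x f : in_XQ p x -> pairing (fun k => affine_eval f (p k)) x = 0.
Proof.
case=> s0 s1 s2.
have -> : pairing (fun k => affine_eval f (p k)) x =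
    f.1.1 * \sum_k x k * (p k).1 + f.1.2 * \sum_k x k * (p k).2 + f.2 * \sum_k x k.
  rewrite /pairing !mulr_sumr -!big_split /=.
  by apply: eq_bigr => k _; rewrite /affine_eval; ring.
by rewrite s0 s1 s2 !mulr0 !addr0.
Qed.

Lemma pairing_psiN x f : in_XQ p x -> pairing (psi_of p (- f)) x = pairing (psi_of p f) x.
Proof.
move=> xXQ; have := pairing_affine_eq0 f xXQ.
rewrite /pairing /psi_of => affine0.
under eq_bigr do rewrite affine_evalN min0N mulrBr.
by rewrite sumrB affine0 subr0.
Qed.

Lemma pairing_psi_gt0 x f i j w0 : in_XQ p x ->
    (forall w, w != i -> w != j -> x w < 0) ->
    affine_eval f (p w0) != 0 ->
    affine_eval f (p i) * affine_eval f (p w0) <= 0 ->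
    affine_eval f (p j) * affine_eval f (p w0) <= 0 ->
  0 < pairing (psi_of p f) x.
Proof.
move=> xXQ x_lt0.
wlog fw0 : f / affine_eval f (p w0) < 0.
  move=> hwlog f0 fi fj; case: (ltgtP (affine_eval f (p w0)) 0) => fw0.
  - exact: hwlog.
  - by rewrite -pairing_psiN //; apply: hwlog; rewrite !affine_evalN ?mulrNN ?oppr_lt0 ?oppr_eq0.
  - by rewrite fw0 eqxx in f0.
move=> _; rewrite !nmulr_lle0 // => fi fj.
apply: (sum_mul_min0_gt0 (g := fun k => affine_eval f (p k))) fw0 => w fw.
by apply: x_lt0; apply: contraTneq fw => ->; rewrite -leNgt.
Qed.

Definition moment c (a : R * R) : R * R :=
  (\sum_k c k * ((p k).1 - a.1), \sum_k c k * ((p k).2 - a.2)).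

Lemma pairing_orient c a b :
  pairing (fun k => orient a b (p k)) c = det2 (b - a) (moment c a).
Proof.
rewrite /pairing /det2 /= !mulr_sumr -sumrB.
by apply: eq_bigr => k _; rewrite /orient; ring.
Qed.

(* When [c] annihilates [orient (p i) (p j)], its moment about [p i] is
   [lift_coef c i j *: (p j - p i)]. *)
Definition lift_coef c (i j : 'I_n) : R := proj_coef (p j - p i) (moment c (p i)).

Definition lift_XQ c (i j : 'I_n) (k : 'I_n) : R :=
  c k + (if k == i then lift_coef c i j - \sum_l c l else 0)
      + (if k == j then - lift_coef c i j else 0).

Lemma lift_XQ_out c i j k : k != i -> k != j -> lift_XQ c i j k = c k.
Proof. by move=> /negbTE ki /negbTE kj; rewrite /lift_XQ ki kj !addr0. Qed.

Lemma pairing_add_delta g c i j (al be : R) :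
  pairing g (fun k => c k + (if k == i then al else 0) + (if k == j then be else 0)) =
  pairing g c + al * g i + be * g j.
Proof.
have delta (ga : R) l : \sum_k (if k == l then ga else 0) * g k = ga * g l.
  by rewrite (bigD1 l) //= eqxx big1 ?addr0 // => k /negbTE ->; rewrite mul0r.
by rewrite /pairing; under eq_bigr do rewrite !mulrDl; rewrite !big_split /= !delta.
Qed.

Lemma lift_XQ_in_XQ c i j : p i != p j ->
  pairing (fun k => orient (p i) (p j) (p k)) c = 0 -> in_XQ p (lift_XQ c i j).
Proof.
move=> pij c_orth; set t := lift_coef c i j.
have [m1 m2] : (moment c (p i)).1 = t * (p j - p i).1 /\
               (moment c (p i)).2 = t * (p j - p i).2.
  by apply: det2_eq0_proj; rewrite ?subr_eq0 1?eq_sym // -pairing_orient.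
have momentE (g : 'I_n -> R) (a : R) :
    \sum_k c k * (g k - a) = pairing g c - a * \sum_k c k.
  by rewrite /pairing mulr_sumr -sumrB; apply: eq_bigr => k _; ring.
rewrite /= (momentE (fun k => (p k).1)) in m1.
rewrite /= (momentE (fun k => (p k).2)) in m2.
have sum1 x : \sum_k x k = pairing (fun=> 1) x by apply: eq_bigr => k _; rewrite mulr1.
split.
- by rewrite sum1 /lift_XQ -/t pairing_add_delta -sum1; ring.
- rewrite -[LHS]/(pairing (fun k => (p k).1) _) /lift_XQ -/t pairing_add_delta.
  have -> : pairing (fun k => (p k).1) c = (p i).1 * \sum_k c k + t * ((p j).1 - (p i).1).
    by rewrite -m1; ring.
  ring.
- rewrite -[LHS]/(pairing (fun k => (p k).2) _) /lift_XQ -/t pairing_add_delta.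
  have -> : pairing (fun k => (p k).2) c = (p i).2 * \sum_k c k + t * ((p j).2 - (p i).2).
    by rewrite -m2; ring.
  ring.
Qed.

Definition diag_vector (i j : 'I_n) : 'I_n -> R :=
  lift_XQ (balance (fun k => orient (p i) (p j) (p k))) i j.

End DualPairing.

Lemma diag_in_out n (k l : 'I_n) : is_diag k l ->
  exists w w' : 'I_n, (k < w < l)%N /\ ((w' < k)%N || (l < w')%N).
Proof.
case/and3P=> kl k1l not_sides; have l_lt := ltn_ord l.
have w_lt : (k.+1 < n)%N by lia.
have [k0 | k_gt0] := posnP k.
  have w'_lt : (n.-1 < n)%N by lia.
  by exists (Ordinal w_lt), (Ordinal w'_lt) => /=; move: not_sides; rewrite k0 /=; lia.
have w'_lt : (0 < n)%N by lia.
by exists (Ordinal w_lt), (Ordinal w'_lt) => /=; lia.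
Qed.

Section ConvexPolygon.
Variables (R : realFieldType) (n : nat) (p : 'I_n -> R * R).
Hypothesis p_convex : convex_polygon p.
Implicit Types a b c i j k l w : 'I_n.

Lemma orient_mul_gt0 a b c a' b' c' : (a < b < c)%N -> (a' < b' < c')%N ->
  0 < orient (p a) (p b) (p c) * orient (p a') (p b') (p c').
Proof.
move=> /andP[ab bc] /andP[ab' bc'].
case: p_convex => sgn; first exact: mulr_gt0 (sgn _ _ _ ab bc) (sgn _ _ _ ab' bc').
by rewrite nmulr_rgt0 ?sgn.
Qed.

Lemma orient_in_out_lt0 k l w w' : (k < w < l)%N -> (w' < k)%N || (l < w')%N ->
  orient (p k) (p l) (p w) * orient (p k) (p l) (p w') < 0.
Proof.
move=> kwl w'_out; rewrite orient_swap23 mulNr oppr_lt0.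
case/orP: w'_out => w'_out; last by rewrite orient_mul_gt0 //; lia.
by rewrite (orient_rot (p w')) orient_mul_gt0 //; lia.
Qed.

Lemma orient_in_out_le0 k l w w' : (k < l)%N -> (k <= w <= l)%N ->
    (w' <= k)%N || (l <= w')%N ->
  orient (p k) (p l) (p w) * orient (p k) (p l) (p w') <= 0.
Proof.
move=> kl w_in w'_out.
have [-> | wk] := eqVneq w k; first by rewrite orient_same13 mul0r.
have [-> | wl] := eqVneq w l; first by rewrite orient_same23 mul0r.
have [-> | w'k] := eqVneq w' k; first by rewrite orient_same13 mulr0.
have [-> | w'l] := eqVneq w' l; first by rewrite orient_same23 mulr0.
move: wk wl w'k w'l; rewrite -!val_eqE /= => wk wl w'k w'l.
by apply/ltW/orient_in_out_lt0; lia.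
Qed.

Lemma diag_orient_neq0 k l w : is_diag k l -> w != k -> w != l ->
  orient (p k) (p l) (p w) != 0.
Proof.
move=> kl; rewrite -!val_eqE /= => wk wl.
have [w_in [w_out [hin hout]]] := diag_in_out kl.
have [hw | hw] : (k < w < l)%N \/ (w < k)%N || (l < w)%N by move: kl => /and3P[]; lia.
  by apply: contraTneq (orient_in_out_lt0 hw hout) => ->; rewrite mul0r ltxx.
by apply: contraTneq (orient_in_out_lt0 hin hw) => ->; rewrite mulr0 ltxx.
Qed.

Lemma diag_endpoints_neq k l : is_diag k l -> p k != p l.
Proof.
move=> kl; have [w [_ [hin _]]] := diag_in_out kl.
have wk : w != k by rewrite -val_eqE /=; lia.
have wl : w != l by rewrite -val_eqE /=; lia.
by apply: contraNneq (diag_orient_neq0 kl wk wl) => ->; rewrite orient_same12.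
Qed.

Lemma diag_affine_neq0 k l f w : is_diag k l -> nonzero_affine f ->
    affine_eval f (p k) = 0 -> affine_eval f (p l) = 0 -> w != k -> w != l ->
  affine_eval f (p w) != 0.
Proof.
move=> kl f0 fk fl wk wl.
have [lam lam0 flam] := nonzero_affine_orient f0 (diag_endpoints_neq kl) fk fl.
by rewrite flam mulf_neq0 ?diag_orient_neq0.
Qed.

Lemma diag_affine_mul_le0 k l f w w' : is_diag k l -> nonzero_affine f ->
    affine_eval f (p k) = 0 -> affine_eval f (p l) = 0 ->
    (k <= w <= l)%N -> (w' <= k)%N || (l <= w')%N ->
  affine_eval f (p w) * affine_eval f (p w') <= 0.
Proof.
move=> kl f0 fk fl w_in w'_out.
have [lam _ flam] := nonzero_affine_orient f0 (diag_endpoints_neq kl) fk fl.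
rewrite !flam mulrACA -expr2 mulr_ge0_le0 ?sqr_ge0 // orient_in_out_le0 //.
by case/and3P: kl.
Qed.

Lemma diag_vector_in_XQ i j : is_diag i j -> in_XQ p (diag_vector p i j).
Proof.
by move=> ij; apply: lift_XQ_in_XQ; [exact: diag_endpoints_neq | exact: balance_orth].
Qed.

Lemma diag_vector_lt0 i j w : is_diag i j -> w != i -> w != j -> diag_vector p i j w < 0.
Proof.
move=> ij wi wj; have [w_in [w_out [hin hout]]] := diag_in_out ij.
by rewrite /diag_vector lift_XQ_out //; apply: balance_lt0 (orient_in_out_lt0 hin hout).
Qed.

End ConvexPolygon.

Unset Implicit Arguments.

Theorem lemma2p6 (R : realFieldType) (n : nat) (p : 'I_n -> R * R) :
  (4 <= n)%N ->
  convex_polygon p ->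
  exists x : 'I_n -> 'I_n -> ('I_n -> R),
    (forall i j : 'I_n, is_diag i j -> in_XQ p (x i j)) /\
    (forall i j k l : 'I_n, is_diag i j -> is_diag k l -> ~~ cross i j k l ->
       forall f : R * R * R, nonzero_affine f ->
         affine_eval f (p k) = 0 -> affine_eval f (p l) = 0 ->
         0 < pairing (psi_of p f) (x i j)).
Proof.
move=> _ p_convex; exists (diag_vector p).
split=> [i j ij | i j k l ij kl no_cross f f0 fk fl]; first exact: diag_vector_in_XQ.
have [w_in [w_out [hin hout]]] := diag_in_out kl.
have sides : (k <= i <= l)%N /\ (k <= j <= l)%N \/
             ((i <= k)%N || (l <= i)%N) /\ ((j <= k)%N || (l <= j)%N).
  by move: ij kl no_cross; rewrite /is_diag /cross; lia.
have f_neq0 (w : 'I_n) : (w : nat) != k -> (w : nat) != l -> affine_eval f (p w) != 0.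
  by move=> wk wl; apply: diag_affine_neq0 kl f0 fk fl wk wl.
have f_le0 := diag_affine_mul_le0 p_convex kl f0 fk fl.
have xXQ := diag_vector_in_XQ p_convex ij; have x_lt0 := diag_vector_lt0 p_convex ij.
case: sides => [[hi hj] | [hi hj]].
  by apply: (pairing_psi_gt0 (w0 := w_out) xXQ x_lt0); [apply: f_neq0 | apply: f_le0 ..]; lia.
by apply: (pairing_psi_gt0 (w0 := w_in) xXQ x_lt0);
  [apply: f_neq0 | rewrite mulrC; apply: f_le0 ..]; lia.
Qed.
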